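(* Let $f(1),f(2),f(3)$ be positive real numbers with $f(1)+f(2)+f(3)=1$. Then there exist a $1$-balanced sequence $\mathbf{u}$ over $\{a,b\}$, a $1$-balanced sequence $\mathbf{b}$ over $\{2,3\}$ and the constant sequence $\mathbf{a}=1^\omega$ such that the ternary sequence $\mathbf{v}=\mathrm{colour}(\mathbf{u},\mathbf{a},\mathbf{b})$ satisfies: (1) for each $i\in\{1,2,3\}$ the frequency of the letter $i$ in $\mathbf{v}$ exists and equals $f(i)$; (2) $\mathbf{v}$ is $2$-balanced.
   Context: A sequence $\mathbf{u}$ over an alphabet $\mathcal A$ is $C$-balanced ($C\ge 1$ an integer) if for any two factors $u,v$ of $\mathbf{u}$ with $|u|=|v|$ and every letter $x\in\mathcal A$ we have $\bigl||u|_x-|v|_x\bigr|\le C$, where $|w|_x$ is the number of occurrences of $x$ in $w$. The frequency of a letter $x$ in $\mathbf{u}=u_0u_1\cdots$ is $\lim_{n\to\infty}|u_0\cdots u_{n-1}|_x/n$, if the limit exists. Colouring: given a sequence $\mathbf{u}$ over $\{a,b\}$ and sequences $\mathbf{a},\mathbf{b}$ over disjoint alphabets $\mathcal A,\mathcal B$, $\mathrm{colour}(\mathbf{u},\mathbf{a},\mathbf{b})$ is the sequence over $\mathcal A\cup\mathcal B$ obtained from $\mathbf{u}$ by replacing the subsequence of all occurrences of $a$ (in order) by the sequence $\mathbf{a}$ and the subsequence of all occurrences of $b$ (in order) by the sequence $\mathbf{b}$. *)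

From Stdlib Require Import Reals Arith Bool.
Open Scope R_scope.

Fixpoint cnt (p : nat -> bool) (i n : nat) : nat :=
  match n with
  | O => O
  | S m => ((if p (i + m)%nat then 1 else 0) + cnt p i m)%nat
  end.

Definition occ {T : Type} (eqb : T -> T -> bool) (u : nat -> T) (x : T) (i n : nat) : nat :=
  cnt (fun k => eqb (u k) x) i n.

Definition balanced {T : Type} (eqb : T -> T -> bool) (C : nat) (u : nat -> T) : Prop :=
  forall (x : T) (i j n : nat), (occ eqb u x i n <= occ eqb u x j n + C)%nat.

Definition has_freq {T : Type} (eqb : T -> T -> bool) (u : nat -> T) (x : T) (l : R) : Prop :=
  Un_cv (fun n => INR (occ eqb u x 0 n) / INR n) l.

(* Colouring: the binary sequence u over {a,b} is encoded as nat -> bool with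
   true = a, false = b.  The n-th letter of u, if it is the k-th occurrence of a
   (k counted from 0), is replaced by a k; similarly for b. *)
Definition colour {T : Type} (u : nat -> bool) (a b : nat -> T) : nat -> T :=
  fun n => if u n then a (cnt (fun k => u k) 0 n)
           else b (cnt (fun k => negb (u k)) 0 n).

(* Take u to be the lower mechanical word of slope f(1) and the colouring of
   its b-positions to be the mechanical word of slope f(2)/(f(2)+f(3)) over
   {2,3}.  Each letter count of v, up to position k, is then an integer part
   of a linear function of k, or the composite of two such functions, so it
   stays within bounded distance of k f(i): this gives the frequencies.  For
   2-balance of the letters 2 and 3, two factors of v of equal length contain
   numbers of b's differing by at most 1, and feeding lengths that differ by
   at most 1 into a 1-balanced count loses at most one more. *)
From Stdlib Require Import Reals Arith Bool Lia Lra ZArith.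
Open Scope R_scope.

Lemma cnt_ext (p q : nat -> bool) (i n : nat) :
  (forall k, p k = q k) -> cnt p i n = cnt q i n.
Proof. intros Hpq; induction n as [|n IH]; simpl; [reflexivity|now rewrite Hpq, IH]. Qed.

Definition counts (p : nat -> bool) (F : nat -> Z) : Prop :=
  forall k, F (S k) = (F k + if p k then 1 else 0)%Z.

Definition compl_count (F : nat -> Z) (k : nat) : Z := (Z.of_nat k - F k)%Z.

Lemma cnt_counts (p : nat -> bool) (F : nat -> Z) :
  counts p F -> forall i n, Z.of_nat (cnt p i n) = (F (i + n)%nat - F i)%Z.
Proof.
  intros HF i n; induction n as [|n IH]; simpl cnt.
  - rewrite Nat.add_0_r; lia.
  - rewrite Nat2Z.inj_add, IH, Nat.add_succ_r, HF.
    destruct (p (i + n)%nat); lia.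
Qed.

Lemma counts_negb (p : nat -> bool) (F : nat -> Z) :
  counts p F -> counts (fun k => negb (p k)) (compl_count F).
Proof.
  intros HF k; unfold compl_count.
  rewrite Nat2Z.inj_succ, HF; destruct (p k); simpl; lia.
Qed.

Lemma counts_colour_right {T : Type} (eqb : T -> T -> bool) (u : nat -> bool)
    (a b : nat -> T) (x : T) (p : nat -> bool) (F : nat -> Z) :
  (forall m, eqb (a m) x = false) -> (forall m, eqb (b m) x = p m) -> counts p F ->
  counts (fun k => eqb (colour u a b k) x) (fun k => F (cnt (fun m => negb (u m)) 0 k)).
Proof.
  intros Ha Hb HF k; unfold colour; simpl cnt.
  destruct (u k); simpl.
  - rewrite Ha; lia.
  - rewrite Hb; apply HF.
Qed.

Definition slope_within (F : nat -> Z) (g E : R) : Prop :=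
  forall p q : nat, Rabs (IZR (F q - F p) - (INR q - INR p) * g) < E.

Lemma slope_within_compl (F : nat -> Z) (g E : R) :
  slope_within F g E -> slope_within (compl_count F) (1 - g) E.
Proof.
  intros HF p q; unfold compl_count.
  rewrite !minus_IZR, <- !INR_IZR_INZ.
  replace (INR q - IZR (F q) - (INR p - IZR (F p)) - (INR q - INR p) * (1 - g))
    with (- (IZR (F q) - IZR (F p) - (INR q - INR p) * g)) by ring.
  rewrite Rabs_Ropp, <- minus_IZR; apply HF.
Qed.

Lemma slope_within_comp (F : nat -> Z) (G : nat -> nat) (g d E1 E2 : R) :
  slope_within F g E1 -> slope_within (fun k => Z.of_nat (G k)) d E2 ->
  slope_within (fun k => F (G k)) (g * d) (E1 + Rabs g * E2).
Proof.
  intros HF HG p q.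
  pose proof (HF (G p) (G q)) as HFpq.
  pose proof (HG p q) as HGpq; rewrite minus_IZR, <- !INR_IZR_INZ in HGpq.
  replace (IZR (F (G q) - F (G p)) - (INR q - INR p) * (g * d))
    with ((IZR (F (G q) - F (G p)) - (INR (G q) - INR (G p)) * g)
          + g * (INR (G q) - INR (G p) - (INR q - INR p) * d)) by ring.
  eapply Rle_lt_trans; [apply Rabs_triang|].
  rewrite Rabs_mult.
  assert (Rabs g * Rabs (INR (G q) - INR (G p) - (INR q - INR p) * d) <= Rabs g * E2)
    by (apply Rmult_le_compat_l; [apply Rabs_pos|lra]).
  lra.
Qed.

Lemma slope_within_cnt (p : nat -> bool) (F : nat -> Z) (g E : R) :
  counts p F -> slope_within F g E -> slope_within (fun k => Z.of_nat (cnt p 0 k)) g E.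
Proof.
  intros Hp HF k l.
  replace (Z.of_nat (cnt p 0 l) - Z.of_nat (cnt p 0 k))%Z with (F l - F k)%Z
    by (rewrite !(cnt_counts p F Hp); simpl; lia).
  apply HF.
Qed.

Definition balanced_count (F : nat -> Z) (C : nat) : Prop :=
  forall i j n, (F (i + n)%nat - F i <= F (j + n)%nat - F j + Z.of_nat C)%Z.

Lemma slope_within_sub_le (F : nat -> Z) (g : R) (p0 p1 q0 q1 : nat) (c : Z) :
  slope_within F g 1 -> 0 <= g <= 1 -> (0 <= c)%Z ->
  (Z.of_nat p1 - Z.of_nat p0 <= Z.of_nat q1 - Z.of_nat q0 + c)%Z ->
  (F p1 - F p0 <= F q1 - F q0 + c + 1)%Z.
Proof.
  intros HF Hg Hc Hpq.
  apply IZR_le in Hc.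
  assert (Hd : INR p1 - INR p0 <= INR q1 - INR q0 + IZR c).
  { rewrite !INR_IZR_INZ, <- !minus_IZR, <- plus_IZR; apply IZR_le; exact Hpq. }
  assert (Hdg : (INR p1 - INR p0) * g <= (INR q1 - INR q0) * g + IZR c) by nra.
  destruct (Rabs_def2 _ _ (HF p0 p1)); destruct (Rabs_def2 _ _ (HF q0 q1)).
  assert (Hlt : IZR ((F p1 - F p0) - (F q1 - F q0)) < IZR (c + 2))
    by (rewrite minus_IZR, plus_IZR; lra).
  apply lt_IZR in Hlt; lia.
Qed.

Lemma balanced_count_of_slope (F : nat -> Z) (g : R) :
  slope_within F g 1 -> 0 <= g <= 1 -> balanced_count F 1.
Proof.
  intros HF Hg i j n.
  change (Z.of_nat 1) with (0 + 1)%Z; rewrite Z.add_assoc.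
  apply (slope_within_sub_le F g); [exact HF|exact Hg|lia|lia].
Qed.

Lemma balanced_count_comp (F : nat -> Z) (G : nat -> nat) (g d : R) :
  slope_within F g 1 -> 0 <= g <= 1 ->
  slope_within (fun k => Z.of_nat (G k)) d 1 -> 0 <= d <= 1 ->
  balanced_count (fun k => F (G k)) 2.
Proof.
  intros HF Hg HG Hd i j n.
  pose proof (balanced_count_of_slope _ d HG Hd i j n) as HGij; simpl in HGij.
  change (Z.of_nat 2) with (1 + 1)%Z; rewrite Z.add_assoc.
  apply (slope_within_sub_le F g); [exact HF|exact Hg|lia|lia].
Qed.

Lemma occ_le_of_counts {T : Type} (eqb : T -> T -> bool) (w : nat -> T) (x : T)
    (p : nat -> bool) (F : nat -> Z) (C : nat) :
  (forall k, eqb (w k) x = p k) -> counts p F -> balanced_count F C ->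
  forall i j n, (occ eqb w x i n <= occ eqb w x j n + C)%nat.
Proof.
  intros Hp HF HC i j n; unfold occ.
  rewrite (cnt_ext _ p i n Hp), (cnt_ext _ p j n Hp).
  pose proof (cnt_counts p F HF i n); pose proof (cnt_counts p F HF j n).
  pose proof (HC i j n); lia.
Qed.

Lemma occ_absent {T : Type} (eqb : T -> T -> bool) (w : nat -> T) (x : T) (i n : nat) :
  (forall k, eqb (w k) x = false) -> occ eqb w x i n = 0%nat.
Proof.
  intros Hx; unfold occ; induction n as [|n IH]; simpl; [reflexivity|now rewrite Hx, IH].
Qed.

Lemma Un_cv_ratio_of_bounded_error (c : nat -> R) (l C : R) :
  0 <= C -> (forall n, Rabs (c n - INR n * l) <= C) ->
  Un_cv (fun n => c n / INR n) l.
Proof.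
  intros HC Hc eps Heps.
  destruct (INR_unbounded (C / eps)) as [N HN].
  assert (HCe : 0 <= C / eps) by (apply Rmult_le_pos; [lra | left; apply Rinv_0_lt_compat; lra]).
  exists N; intros n Hn; unfold R_dist.
  assert (Hpos : C / eps < INR n) by (apply le_INR in Hn; lra).
  assert (HnC : C < eps * INR n).
  { replace C with (eps * (C / eps)) by (field; lra).
    apply Rmult_lt_compat_l; lra. }
  replace (c n / INR n - l) with ((c n - INR n * l) / INR n) by (field; lra).
  unfold Rdiv; rewrite Rabs_mult, Rabs_inv, (Rabs_right (INR n)) by lra.
  apply (Rmult_lt_reg_r (INR n)); [lra|].
  rewrite Rmult_assoc, Rinv_l by lra.
  specialize (Hc n); lra.
Qed.

Lemma has_freq_of_counts {T : Type} (eqb : T -> T -> bool) (w : nat -> T) (x : T)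
    (p : nat -> bool) (F : nat -> Z) (g E : R) :
  (forall k, eqb (w k) x = p k) -> counts p F -> slope_within F g E ->
  has_freq eqb w x g.
Proof.
  intros Hp HF Hg.
  assert (HE : 0 <= E) by exact (Rlt_le _ _ (Rle_lt_trans _ _ _ (Rabs_pos _) (Hg 0%nat 0%nat))).
  apply (Un_cv_ratio_of_bounded_error _ g E HE); intro n.
  unfold occ; rewrite (cnt_ext _ p 0 n Hp).
  rewrite INR_IZR_INZ, (cnt_counts p F HF); simpl (0 + n)%nat.
  pose proof (Hg 0%nat n) as Hn; simpl INR in Hn; rewrite Rminus_0_r in Hn.
  lra.
Qed.

Definition mech (al : R) (k : nat) : Z := Int_part (INR k * al).

Definition mech_word (al : R) (k : nat) : bool := Z.eqb (mech al (S k) - mech al k) 1.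

Definition mech_word23 (be : R) (k : nat) : nat := if mech_word be k then 2%nat else 3%nat.

Lemma slope_within_mech (al : R) : slope_within (mech al) al 1.
Proof.
  intros p q; unfold mech.
  destruct (base_Int_part (INR p * al)); destruct (base_Int_part (INR q * al)).
  apply Rabs_def1; rewrite minus_IZR; lra.
Qed.

Lemma counts_mech_word (al : R) : 0 <= al <= 1 -> counts (mech_word al) (mech al).
Proof.
  intros Hal k; unfold mech_word.
  destruct (Rabs_def2 _ _ (slope_within_mech al k (S k))) as [Hup Hlow].
  rewrite S_INR in Hup, Hlow.
  assert (H2 : IZR (mech al (S k) - mech al k) < IZR 2) by lra.
  assert (H1 : IZR (-1) < IZR (mech al (S k) - mech al k)) by lra.
  apply lt_IZR in H1, H2.
  destruct (Z.eqb_spec (mech al (S k) - mech al k) 1); lia.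
Qed.

Lemma mech_word_balanced (al : R) : 0 <= al <= 1 -> balanced Bool.eqb 1 (mech_word al).
Proof.
  intros Hal [|] i j n.
  - apply (occ_le_of_counts _ _ _ (mech_word al) (mech al));
      [intro k; now destruct (mech_word al k) | now apply counts_mech_word |].
    exact (balanced_count_of_slope _ al (slope_within_mech al) Hal).
  - apply (occ_le_of_counts _ _ _ (fun k => negb (mech_word al k)) (compl_count (mech al)));
      [intro k; now destruct (mech_word al k) | now apply counts_negb, counts_mech_word |].
    apply (balanced_count_of_slope _ (1 - al)); [apply slope_within_compl, slope_within_mech|lra].
Qed.

Lemma mech_word23_eqb_2 (be : R) (k : nat) : Nat.eqb (mech_word23 be k) 2 = mech_word be k.
Proof. unfold mech_word23; now destruct (mech_word be k). Qed.

Lemma mech_word23_eqb_3 (be : R) (k : nat) :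
  Nat.eqb (mech_word23 be k) 3 = negb (mech_word be k).
Proof. unfold mech_word23; now destruct (mech_word be k). Qed.

Lemma mech_word23_absent (be : R) (x k : nat) :
  x <> 2%nat -> x <> 3%nat -> Nat.eqb (mech_word23 be k) x = false.
Proof. intros H2 H3; apply Nat.eqb_neq; unfold mech_word23; destruct (mech_word be k); lia. Qed.

Lemma mech_word23_balanced (be : R) : 0 <= be <= 1 -> balanced Nat.eqb 1 (mech_word23 be).
Proof.
  intros Hbe x i j n.
  destruct (Nat.eq_dec x 2) as [->|Hx2]; [|destruct (Nat.eq_dec x 3) as [->|Hx3]].
  - apply (occ_le_of_counts _ _ _ _ (mech be) _ (mech_word23_eqb_2 be));
      [now apply counts_mech_word|].
    exact (balanced_count_of_slope _ be (slope_within_mech be) Hbe).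
  - apply (occ_le_of_counts _ _ _ _ (compl_count (mech be)) _ (mech_word23_eqb_3 be));
      [now apply counts_negb, counts_mech_word|].
    apply (balanced_count_of_slope _ (1 - be)); [apply slope_within_compl, slope_within_mech|lra].
  - rewrite (occ_absent _ _ _ i n) by (intro; now apply mech_word23_absent); lia.
Qed.

Section MechColouring.

Variables al be : R.
Hypothesis al_range : 0 <= al <= 1.
Hypothesis be_range : 0 <= be <= 1.

Definition mech_colouring : nat -> nat :=
  colour (mech_word al) (fun _ => 1%nat) (mech_word23 be).

Let b_index (k : nat) : nat := cnt (fun m => negb (mech_word al m)) 0 k.

Lemma slope_within_b_index : slope_within (fun k => Z.of_nat (b_index k)) (1 - al) 1.
Proof.
  apply (slope_within_cnt _ (compl_count (mech al)));
    [now apply counts_negb, counts_mech_word | apply slope_within_compl, slope_within_mech].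
Qed.

Lemma mech_colouring_eqb_1 (k : nat) : Nat.eqb (mech_colouring k) 1 = mech_word al k.
Proof.
  unfold mech_colouring, colour, mech_word23.
  destruct (mech_word al k); [reflexivity|now destruct (mech_word be _)].
Qed.

Lemma counts_mech_colouring_2 :
  counts (fun k => Nat.eqb (mech_colouring k) 2) (fun k => mech be (b_index k)).
Proof.
  apply (counts_colour_right _ _ _ _ _ (mech_word be));
    [reflexivity | apply mech_word23_eqb_2 | now apply counts_mech_word].
Qed.

Lemma counts_mech_colouring_3 :
  counts (fun k => Nat.eqb (mech_colouring k) 3) (fun k => compl_count (mech be) (b_index k)).
Proof.
  apply (counts_colour_right _ _ _ _ _ (fun m => negb (mech_word be m)));
    [reflexivity | apply mech_word23_eqb_3 | now apply counts_negb, counts_mech_word].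
Qed.

Lemma mech_colouring_freq_1 : has_freq Nat.eqb mech_colouring 1%nat al.
Proof.
  exact (has_freq_of_counts _ _ _ _ _ _ _ mech_colouring_eqb_1
           (counts_mech_word al al_range) (slope_within_mech al)).
Qed.

Lemma mech_colouring_freq_2 : has_freq Nat.eqb mech_colouring 2%nat (be * (1 - al)).
Proof.
  exact (has_freq_of_counts _ _ _ _ _ _ _ (fun k => eq_refl) counts_mech_colouring_2
    (slope_within_comp _ _ _ _ _ _ (slope_within_mech be) slope_within_b_index)).
Qed.

Lemma mech_colouring_freq_3 : has_freq Nat.eqb mech_colouring 3%nat ((1 - be) * (1 - al)).
Proof.
  exact (has_freq_of_counts _ _ _ _ _ _ _ (fun k => eq_refl) counts_mech_colouring_3
    (slope_within_comp _ _ _ _ _ _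
       (slope_within_compl _ _ _ (slope_within_mech be)) slope_within_b_index)).
Qed.

Lemma mech_colouring_balanced : balanced Nat.eqb 2 mech_colouring.
Proof.
  intros x i j n.
  destruct (Nat.eq_dec x 1) as [->|Hx1];
    [|destruct (Nat.eq_dec x 2) as [->|Hx2]; [|destruct (Nat.eq_dec x 3) as [->|Hx3]]].
  - enough (occ Nat.eqb mech_colouring 1 i n <= occ Nat.eqb mech_colouring 1 j n + 1)%nat
      by lia.
    apply (occ_le_of_counts _ _ _ _ _ _ mech_colouring_eqb_1 (counts_mech_word al al_range)).
    exact (balanced_count_of_slope _ al (slope_within_mech al) al_range).
  - apply (occ_le_of_counts _ _ _ _ _ _ (fun k => eq_refl) counts_mech_colouring_2).
    apply (balanced_count_comp _ _ be (1 - al));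
      [apply slope_within_mech | exact be_range | apply slope_within_b_index | lra].
  - apply (occ_le_of_counts _ _ _ _ _ _ (fun k => eq_refl) counts_mech_colouring_3).
    apply (balanced_count_comp _ _ (1 - be) (1 - al));
      [apply slope_within_compl, slope_within_mech | lra | apply slope_within_b_index | lra].
  - rewrite (occ_absent _ _ _ i n); [lia|].
    intro k; unfold mech_colouring, colour.
    destruct (mech_word al k); [apply Nat.eqb_neq; lia | now apply mech_word23_absent].
Qed.

End MechColouring.

Theorem theorem1 (f : nat -> R) :
  0 < f 1%nat -> 0 < f 2%nat -> 0 < f 3%nat ->
  f 1%nat + f 2%nat + f 3%nat = 1 ->
  exists (u : nat -> bool) (b : nat -> nat),
    balanced Bool.eqb 1 u /\
    (forall n, b n = 2%nat \/ b n = 3%nat) /\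
    balanced Nat.eqb 1 b /\
    let v := colour u (fun _ => 1%nat) b in
    (forall i : nat, (1 <= i <= 3)%nat -> has_freq Nat.eqb v i (f i)) /\
    balanced Nat.eqb 2 v.
Proof.
  intros h1 h2 h3 hsum.
  set (al := f 1%nat); set (be := f 2%nat / (f 2%nat + f 3%nat)).
  assert (Hal : 0 <= al <= 1) by (unfold al; lra).
  assert (Hrest : 1 - al = f 2%nat + f 3%nat) by (unfold al; lra).
  assert (Hbe_def : be * (f 2%nat + f 3%nat) = f 2%nat) by (unfold be; field; lra).
  assert (Hbe : 0 <= be <= 1) by (split; nra).
  assert (Hf2 : f 2%nat = be * (1 - al)) by (rewrite Hrest; lra).
  assert (Hf3 : f 3%nat = (1 - be) * (1 - al)) by (rewrite Hrest; lra).
  exists (mech_word al), (mech_word23 be).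
  split; [now apply mech_word_balanced|].
  split; [intro n; unfold mech_word23; destruct (mech_word be n); auto|].
  split; [now apply mech_word23_balanced|].
  split; [|exact (mech_colouring_balanced al be Hal Hbe)].
  intros i Hi.
  assert (Hi' : i = 1%nat \/ i = 2%nat \/ i = 3%nat) by lia.
  destruct Hi' as [->|[->| ->]].
  - exact (mech_colouring_freq_1 al be Hal).
  - rewrite Hf2; exact (mech_colouring_freq_2 al be Hal Hbe).
  - rewrite Hf3; exact (mech_colouring_freq_3 al be Hal Hbe).
Qed.
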